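(* Let $\ell\ge 2$, $N\ge 1$ and $D\ge 0$ be integers and let $T=4D\lceil\log_\ell N\rceil+1$. There exists a $T$-$(T,N,D)$-tropical protocol within maximum delay $\ell$.
   Context: Tropical arithmetic on $\mathbb{R}\cup\{\infty\}$: $x\oplus y=\min(x,y)$, $x\odot y=x+y$, with $x\oplus\infty=x$ and $x\odot\infty=\infty$; for a matrix $S$ and vector $\mathbf{x}$, $(S\odot\mathbf{x})_t=\min_j(S_{tj}+x_j)$. An $R$-$(T,N,D)$-tropical protocol consists of $R$ functions $\mathcal{S}^{(1)},\dots,\mathcal{S}^{(R)}$: $S^{(1)}=\mathcal{S}^{(1)}()$ is a fixed matrix, and for $r\ge 2$, $S^{(r)}=\mathcal{S}^{(r)}$ applied to the results $\bigl(S^{(1)};\dots;S^{(r-1)}\bigr)\odot\mathbf{x}$ of all previous rounds (vertical stacking); each $S^{(r)}$ has $N$ columns, entries in $\{0\}\cup\mathbb{N}\cup\{\infty\}$, and a number of rows that may depend on previous results, the total number of rows being at most $T$ for every $\mathbf{x}$; and the final result $\bigl(S^{(1)};\dots;S^{(R)}\bigr)\odot\mathbf{x}$ determines $\mathbf{x}$ uniquely among all $\mathbf{x}\in(\{0\}\cup\mathbb{N}\cup\{\infty\})^N$ with at most $D$ finite entries. It is within maximum delay $\ell$ if all schedule matrices use only entries in $\{0,1,\dots,\ell,\infty\}$. *)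

From mathcomp Require Import all_boot.
Set Implicit Arguments. Unset Strict Implicit. Unset Printing Implicit Defensive.

(* Tropical numbers {0} ∪ ℕ ∪ {∞}: [Some n] is the finite value n, [None] is ∞. *)
Definition trop := option nat.

Definition tadd (a b : trop) : trop :=
  match a, b with
  | Some m, Some n => Some (minn m n)
  | Some m, None => Some m
  | None, b => b
  end.

Definition tmul (a b : trop) : trop :=
  match a, b with
  | Some m, Some n => Some (m + n)
  | _, _ => None
  end.

Definition trow (N : nat) := {ffun 'I_N -> trop}.
Definition tvec (N : nat) := {ffun 'I_N -> trop}.

Definition row_apply N (s : trow N) (x : tvec N) : trop :=
  \big[tadd/None]_(j < N) tmul (s j) (x j).

(* A protocol is given by its round functions: [S r prev] is the schedule
   matrix (list of rows) of round r+1 (0-indexed r), computed from the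
   vertically stacked results [prev] of all previous rounds. *)
Definition protocol N := nat -> seq trop -> seq (trow N).

Fixpoint run N (S : protocol N) (r : nat) (x : tvec N) : seq trop :=
  match r with
  | 0 => [::]
  | r'.+1 => let prev := run S r' x in
             prev ++ map (fun s => row_apply s x) (S r' prev)
  end.

Definition nfinite N (x : tvec N) : nat := #|[set j | x j != None]|.

Definition is_tropical_protocol (R T N D : nat) (S : protocol N) : Prop :=
  (forall x : tvec N, size (run S R x) <= T) /\
  (forall x y : tvec N, nfinite x <= D -> nfinite y <= D ->
     run S R x = run S R y -> x = y).

Definition within_delay (R N l : nat) (S : protocol N) : Prop :=
  forall (x : tvec N) (r : nat), r < R ->
    forall s, s \in S r (run S r x) ->
      forall j : 'I_N, match s j with Some e => e <= l | None => true end.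

Arguments is_tropical_protocol : clear implicits.
Arguments within_delay : clear implicits.

From HB Require Import structures.
From mathcomp Require Import all_boot zify.
From Stdlib Require Import ClassicalEpsilon.
Set Implicit Arguments. Unset Strict Implicit. Unset Printing Implicit Defensive.

(* A protocol is read off an adaptive strategy: each round asks the query that the strategy
   prescribes after the answers of the previous rounds.  So it suffices to determine every x
   with at most D finite entries by 4 D ceil(log_l N) + 1 adaptively chosen queries with
   delays in {0,...,l,oo}.
   Group the positions into the l-ary tree of blocks [k l^h, (k+1) l^h).  A first query
   returns the minimum of x.  When the minimum m of x on a list of at most l blocks is known,
   the query delaying the i-th block by i returns r = min (i + x_j); every minimiser lies in a
   block of index at least r - m, and r is attained in a block of index at most r - m, so a
   few delay-free queries around this pivot block split the list into shorter lists of known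
   minimum, and a single block is replaced by its l children.  A potential charging 4c - 2
   to a nonempty block with c nonempty children, plus the charges of the children, is at most
   4 ceil(log_l N) times the number of finite entries and decreases with every query. *)

(** * Tropical minima *)

Lemma taddA : associative tadd.
Proof. by case=> [a|] [b|] [c|] //=; rewrite minnA. Qed.

Lemma taddC : commutative tadd.
Proof. by case=> [a|] [b|] //=; rewrite minnC. Qed.

Lemma add0t : left_id None tadd.
Proof. by case. Qed.

HB.instance Definition _ := Monoid.isComLaw.Build trop None tadd taddA taddC add0t.

Definition tle (a b : trop) : bool :=
  match a, b with
  | _, None => true
  | None, Some _ => false
  | Some m, Some n => m <= n
  end.

Lemma tle_taddl a b : tle (tadd a b) a.
Proof. by case: a b => [a|] [b|] //=; rewrite geq_minl. Qed.

Section TropicalMin.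
Variable I : finType.
Implicit Types (P : pred I) (F : I -> trop).

Definition tmin P F : trop := \big[tadd/None]_(i | P i) F i.

Lemma tmin_le P F i : P i -> tle (tmin P F) (F i).
Proof. by move=> Pi; rewrite /tmin (bigD1 i) //= tle_taddl. Qed.

Lemma tmin_leS P F w i v : tmin P F = Some w -> P i -> F i = Some v -> w <= v.
Proof. by move=> E Pi Fi; have := tmin_le F Pi; rewrite E Fi. Qed.

Lemma tmin_attained P F w : tmin P F = Some w -> exists i, P i /\ F i = Some w.
Proof.
rewrite /tmin; elim/big_rec: _ => [//|i a Pi IH].
case E: (F i) => [b|]; case: a IH => [a|] IH //=.
- rewrite /minn; case: ltnP => _ [Ew]; subst w; [by exists i | exact: IH].
- by move=> [Ew]; subst w; exists i.
Qed.

Lemma tmin_None P F : tmin P F = None <-> forall i, P i -> F i = None.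
Proof.
split=> [E i Pi | H]; last by rewrite /tmin big1.
by have := tmin_le F Pi; rewrite E; case: (F i).
Qed.

Lemma tmin_Some P F w :
  (exists i, P i /\ F i = Some w) -> (forall i v, P i -> F i = Some v -> w <= v) ->
  tmin P F = Some w.
Proof.
move=> [i [Pi Fi]] H; have := tmin_le F Pi; rewrite Fi.
case E: (tmin P F) => [w'|] //= le_w'w.
have [i' [Pi' Fi']] := tmin_attained E.
by congr Some; apply/eqP; rewrite eqn_leq le_w'w (H _ _ Pi' Fi').
Qed.

Lemma eq_tmin P P' F F' : P =1 P' -> (forall i, P i -> F i = F' i) ->
  tmin P F = tmin P' F'.
Proof. by move=> eqP eqF; rewrite /tmin (eq_bigr F' eqF); apply: eq_bigl. Qed.

End TropicalMin.

Definition delay_row N (P : pred 'I_N) (d : 'I_N -> nat) : trow N :=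
  [ffun j => if P j then Some (d j) else None].

Lemma row_apply_delay_row N (P : pred 'I_N) d (x : tvec N) :
  row_apply (delay_row P d) x = tmin P (fun j => tmul (Some (d j)) (x j)).
Proof.
rewrite /row_apply /tmin [RHS]big_mkcond.
by apply: eq_bigr => j _; rewrite ffunE; case: (P j).
Qed.

(** * Adaptive strategies and protocols *)

Section AdaptiveProtocol.
Variables (N l : nat).
Implicit Types (K : tvec N -> Prop) (q : trow N).

Definition admissible q : bool :=
  [forall j, if q j is Some e then e <= l else true].

Fixpoint resolvable n K : Prop :=
  match n with
  | 0 => forall x y, K x -> K y -> x = y
  | n'.+1 => exists2 q, admissible q & forall a, resolvable n' (fun x => K x /\ row_apply q x = a)
  end.

Definition empty_row : trow N := [ffun _ => None].

Lemma admissible_empty_row : admissible empty_row.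
Proof. by apply/forallP => j; rewrite ffunE. Qed.

Lemma resolvable_sub n K K' : (forall x, K' x -> K x) -> resolvable n K -> resolvable n K'.
Proof.
elim: n K K' => [|n IH] K K' sub /=; first by move=> res x y /sub Kx /sub Ky; apply: res.
case=> q adm res; exists q => // a.
by apply: IH (res a) => x [/sub Kx Ex].
Qed.

Lemma resolvable_subsingleton n K : (forall x y, K x -> K y -> x = y) -> resolvable n K.
Proof.
elim: n K => [|n IH] K uniqK //=; exists empty_row => [|a]; first exact: admissible_empty_row.
by apply: IH => x y [Kx _] [Ky _]; apply: uniqK.
Qed.

Definition next_query K n : trow N :=
  let q := epsilon (inhabits empty_row)
             (fun q => admissible q /\ forall a, resolvable n (fun x => K x /\ row_apply q x = a)) in
  if admissible q then q else empty_row.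

Lemma admissible_next_query K n : admissible (next_query K n).
Proof. by rewrite /next_query; case: ifP => // _; apply: admissible_empty_row. Qed.

Lemma next_queryP K n : resolvable n.+1 K ->
  forall a, resolvable n (fun x => K x /\ row_apply (next_query K n) x = a).
Proof.
case=> q adm res.
have [adm' res'] := epsilon_spec (inhabits empty_row)
  (fun q => admissible q /\ forall a, resolvable n (fun x => K x /\ row_apply q x = a))
  (ex_intro _ q (conj adm res)).
by rewrite /next_query adm'.
Qed.

(* The elements of K consistent with the answers [ans] to the successive [next_query]s,
   the first of which is asked with [n] queries left. *)
Fixpoint candidates K n (ans : seq trop) : tvec N -> Prop :=
  match ans with
  | [::] => K
  | a :: ans' => candidates (fun x => K x /\ row_apply (next_query K n.-1) x = a) n.-1 ans'
  end.

Lemma candidates_rcons K n ans a :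
  candidates K n (rcons ans a) =
  (fun x => candidates K n ans x /\
            row_apply (next_query (candidates K n ans) (n - size ans).-1) x = a).
Proof.
elim: ans K n => [|b ans IH] K n /=; first by rewrite subn0.
by rewrite IH; have -> : n.-1 - size ans = n - (size ans).+1 by lia.
Qed.

Definition adaptive_protocol K T : protocol N :=
  fun _ prev => [:: next_query (candidates K T prev) (T - size prev).-1].

Section Run.
Variables (K : tvec N -> Prop) (T : nat).

Lemma size_run r x : size (run (adaptive_protocol K T) r x) = r.
Proof. by elim: r => //= r IH; rewrite size_cat IH addn1. Qed.

Lemma run_candidates r x : r <= T -> K x -> resolvable T K ->
  let ans := run (adaptive_protocol K T) r x in
  candidates K T ans x /\ resolvable (T - r) (candidates K T ans).
Proof.
move=> + Kx resK; elim: r => [|r IH] le_rT /=; first by rewrite subn0.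
have [cand res] := IH (ltnW le_rT).
rewrite cats1 candidates_rcons size_run.
move: res; rewrite -(prednK (_ : 0 < T - r)) ?subn_gt0 // => res.
by split=> //; rewrite subnS; apply: next_queryP.
Qed.

End Run.

Lemma resolvable_protocol D T : resolvable T (fun x => nfinite x <= D) ->
  exists S, is_tropical_protocol T T N D S /\ within_delay T N l S.
Proof.
set K := fun x => _; move=> resK; exists (adaptive_protocol K T); split; first split.
- by move=> x; rewrite size_run.
- move=> x y Kx Ky Exy.
  have [cand_x res] := run_candidates (leqnn T) Kx resK.
  have [cand_y _] := run_candidates (leqnn T) Ky resK.
  by move: res; rewrite subnn; apply; rewrite // Exy.
- move=> x r _ s; rewrite inE => /eqP -> j.
  by move/forallP: (admissible_next_query (candidates K T (run (adaptive_protocol K T) r x))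
                     (T - size (run (adaptive_protocol K T) r x)).-1); apply.
Qed.

End AdaptiveProtocol.

Lemma index_take (T : eqType) (k : T) n (s : seq T) :
  k \in take n s -> index k (take n s) = index k s.
Proof.
elim: s n => [|a s IH] [|n] //= ks.
case: eqP => // ne_ak; congr _.+1; apply: IH.
by move: ks; rewrite inE; case: eqP => // E; case: ne_ak.
Qed.

Lemma in_drop_uniq (T : eqType) (k : T) n (s : seq T) :
  uniq s -> k \in s -> (k \in drop n s) = (n <= index k s).
Proof.
move=> us ks; have : uniq (take n s ++ drop n s) by rewrite cat_take_drop.
rewrite cat_uniq => /and3P [_ dis _].
have : k \in take n s ++ drop n s by rewrite cat_take_drop.
rewrite mem_cat in_take //; case: ltnP => //= lt_kn kd.
by apply/negP => kd'; apply: (negP dis); apply/hasP; exists k; rewrite ?in_take.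
Qed.

Lemma take_nth_drop (T : Type) (x0 : T) g (s : seq T) : g < size s ->
  s = take g s ++ nth x0 s g :: drop g.+1 s.
Proof. by move=> gs; rewrite -(drop_nth x0 gs) cat_take_drop. Qed.

Definition rem_nth (T : Type) (s : seq T) g := take g s ++ drop g.+1 s.

Lemma rem_nth_subseq (T : eqType) (s : seq T) g : subseq (rem_nth s g) s.
Proof.
rewrite /rem_nth -{3}(cat_take_drop g s); apply: cat_subseq => //.
by rewrite -add1n -drop_drop drop_subseq.
Qed.

(** * Blocks *)

Section Blocks.
Variables (N l : nat).
Hypothesis l_gt1 : 1 < l.
Implicit Types (x : tvec N) (s : seq nat).

Definition block h (j : 'I_N) := j %/ l ^ h.
Definition in_blocks h s (j : 'I_N) : bool := block h j \in s.
Definition block_index h s (j : 'I_N) := index (block h j) s.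

Definition min_on h s x : trop := tmin (in_blocks h s) x.
Definition shifted_min_on h s x : trop :=
  tmin (in_blocks h s) (fun j => tmul (Some (block_index h s j)) (x j)).

Definition min_row h s : trow N := delay_row (in_blocks h s) (fun _ => 0).
Definition shift_row h s : trow N := delay_row (in_blocks h s) (block_index h s).

Lemma min_rowE h s x : row_apply (min_row h s) x = min_on h s x.
Proof. by rewrite row_apply_delay_row; apply: eq_tmin => // j _; case: (x j). Qed.

Lemma shift_rowE h s x : row_apply (shift_row h s) x = shifted_min_on h s x.
Proof. by rewrite row_apply_delay_row. Qed.

Lemma admissible_min_row h s : admissible l (min_row h s).
Proof. by apply/forallP => j; rewrite ffunE; case: ifP. Qed.

Lemma admissible_shift_row h s : size s <= l -> admissible l (shift_row h s).
Proof.
move=> sl; apply/forallP => j; rewrite ffunE; case: ifP => // sj.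
by apply: leq_trans sl; apply: ltnW; rewrite /block_index index_mem.
Qed.

Lemma block_index_lt h s j : in_blocks h s j -> block_index h s j < size s.
Proof. by rewrite /block_index index_mem. Qed.

Lemma block_index_take h s g j :
  in_blocks h (take g s) j -> block_index h (take g s) j = block_index h s j.
Proof. exact: index_take. Qed.

Lemma in_blocks_take h s g j :
  in_blocks h (take g s) j = in_blocks h s j && (block_index h s j < g).
Proof.
rewrite /in_blocks /block_index; case E: (block h j \in s); last first.
  by apply/negP => /mem_take; rewrite E.
by rewrite in_take.
Qed.

Lemma in_blocks_drop h s g j : uniq s ->
  in_blocks h (drop g s) j = in_blocks h s j && (g <= block_index h s j).
Proof.
move=> us; rewrite /in_blocks /block_index; case E: (block h j \in s); last first.
  by apply/negP => /mem_drop; rewrite E.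
by rewrite in_drop_uniq.
Qed.

Lemma in_blocks_nth h s g j : uniq s -> g < size s ->
  in_blocks h [:: nth 0 s g] j = in_blocks h s j && (block_index h s j == g).
Proof.
move=> us gs; rewrite /in_blocks /block_index inE; case E: (block h j \in s).
  by apply/eqP/eqP => [->|<-]; [apply: index_uniq | rewrite nth_index].
by apply/negP => /eqP Eb; move: E; rewrite Eb mem_nth.
Qed.

Lemma in_blocks_rem_nth h s g j : uniq s ->
  in_blocks h (rem_nth s g) j = in_blocks h s j && (block_index h s j != g).
Proof.
move=> us; rewrite /rem_nth {1}/in_blocks mem_cat.
rewrite -[_ \in take _ _]/(in_blocks h (take g s) j).
rewrite -[_ \in drop _ _]/(in_blocks h (drop g.+1 s) j).
by rewrite in_blocks_take in_blocks_drop //; case: (in_blocks h s j); rewrite //= neq_ltn.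
Qed.

Definition children (i : nat) := [seq i * l + t | t <- iota 0 l].

Lemma mem_children i k : (k \in children i) = (k %/ l == i).
Proof.
have l_gt0 : 0 < l by apply: ltnW.
apply/mapP/eqP => [[t] |Ek].
  by rewrite mem_iota add0n => tl ->; rewrite divnMDl // divn_small // addn0.
exists (k %% l); first by rewrite mem_iota add0n ltn_mod.
by rewrite -Ek -divn_eq.
Qed.

Lemma children_uniq i : uniq (children i).
Proof. by rewrite map_inj_uniq ?iota_uniq //; apply: addnI. Qed.

Lemma size_children i : size (children i) = l.
Proof. by rewrite size_map size_iota. Qed.

Lemma blockS h j : block h.+1 j = block h j %/ l.
Proof. by rewrite /block expnSr divnMA. Qed.

Lemma in_blocks_children h i j : in_blocks h (children i) j = in_blocks h.+1 [:: i] j.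
Proof. by rewrite /in_blocks mem_children blockS inE. Qed.

Lemma min_on_children h i x : min_on h (children i) x = min_on h.+1 [:: i] x.
Proof. by apply: eq_tmin => // j; rewrite in_blocks_children. Qed.

Lemma min_on_nil h x : min_on h [::] x = None.
Proof. exact/tmin_None. Qed.

Lemma min_on_shifted h s m x : min_on h s x = Some m -> exists r, shifted_min_on h s x = Some r.
Proof.
move=> /tmin_attained [z [sz xz]]; case E: (shifted_min_on h s x) => [r|]; first by exists r.
by move/tmin_None: E => /(_ z sz); rewrite xz.
Qed.

(** * Tasks *)

(* See [consistent] for the meaning of the fields; [r - m] is the index of the pivot block. *)
Inductive task :=
| MinKnown of nat & seq nat & nat
| ShiftKnown of nat & seq nat & nat & nat
| MinOffPivot of nat & seq nat & nat & nat
| MinAtPivot of nat & seq nat & nat & nat.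

Definition task_level t :=
  match t with
  | MinKnown h _ _ | ShiftKnown h _ _ _ | MinOffPivot h _ _ _ | MinAtPivot h _ _ _ => h
  end.

Definition task_blocks t :=
  match t with
  | MinKnown _ s _ | ShiftKnown _ s _ _ | MinOffPivot _ s _ _ | MinAtPivot _ s _ _ => s
  end.

Definition covers t j := in_blocks (task_level t) (task_blocks t) j.

Definition consistent t x : Prop :=
  match t with
  | MinKnown h s m => min_on h s x = Some m
  | ShiftKnown h s m r => min_on h s x = Some m /\ shifted_min_on h s x = Some r
  | MinOffPivot h s m r =>
      [/\ min_on h s x = Some m, shifted_min_on h s x = Some r &
          min_on h (rem_nth s (r - m)) x = Some m]
  | MinAtPivot h s m r =>
      [/\ min_on h s x = Some m, shifted_min_on h s x = Some r,
          min_on h (rem_nth s (r - m)) x = Some m &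
          min_on h (take (r - m).+1 s) x = Some m]
  end.

Fixpoint all_consistent (ts : seq task) x : Prop :=
  if ts is t :: ts' then consistent t x /\ all_consistent ts' x else True.

Lemma all_consistent_cat ts1 ts2 x :
  all_consistent (ts1 ++ ts2) x <-> all_consistent ts1 x /\ all_consistent ts2 x.
Proof. by elim: ts1 => [|t ts IH] /=; [tauto | rewrite IH; tauto]. Qed.

Definition min_task h s m :=
  match s, h with
  | [:: i], h'.+1 => MinKnown h' (children i) m
  | _, _ => MinKnown h s m
  end.

Definition shift_task h s m r := if size s <= 1 then min_task h s m else ShiftKnown h s m r.

Arguments min_task : simpl never.
Arguments shift_task : simpl never.

Definition task_query t : trow N :=
  match t with
  | MinKnown h s _ => shift_row h s
  | ShiftKnown h s m r => min_row h (rem_nth s (r - m))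
  | MinOffPivot h s m r => min_row h (take (r - m).+1 s)
  | MinAtPivot h s m r => min_row h (take (r - m) s)
  end.

Definition next_tasks t (a : trop) : seq task :=
  match t with
  | MinKnown h s m => if a is Some r then [:: shift_task h s m r] else [::]
  | ShiftKnown h s m r => let g := r - m in
      if a is Some m' then
        if m < m' then [:: min_task h [:: nth 0 s g] m; min_task h (rem_nth s g) m']
        else [:: MinOffPivot h s m r]
      else [:: min_task h [:: nth 0 s g] m]
  | MinOffPivot h s m r => let g := r - m in
      if a is Some m' then
        if m < m' then [:: shift_task h (take g.+1 s) m' r; min_task h (drop g.+1 s) m]
        else if g == 0 then [:: min_task h [:: nth 0 s g] m; min_task h (drop g.+1 s) m]
        else [:: MinAtPivot h s m r]
      else [::]
  | MinAtPivot h s m r => let g := r - m in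
      if a is Some m' then
        [:: min_task h [:: nth 0 s g] m; min_task h (take g s) m'; min_task h (drop g.+1 s) m]
      else [:: min_task h [:: nth 0 s g] m; min_task h (drop g.+1 s) m]
  end.

(* A block of level 0 is a single position. *)
Definition resolved t := if t is MinKnown 0 [:: _] _ then true else false.

Definition wf_task t : bool :=
  match t with
  | MinKnown h s _ => [&& uniq s, size s <= l & (size s == 1) ==> (h == 0)]
  | ShiftKnown _ s _ _ | MinOffPivot _ s _ _ | MinAtPivot _ s _ _ =>
      [&& uniq s, 1 < size s & size s <= l]
  end.

Lemma admissible_task_query t : wf_task t -> admissible l (task_query t).
Proof.
case: t => [h s m|h s m r|h s m r|h s m r] /= wft; rewrite ?admissible_min_row //.
by apply: admissible_shift_row; case/and3P: wft.
Qed.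

Lemma consistent_min_task h s m x : consistent (min_task h s m) x <-> min_on h s x = Some m.
Proof. by rewrite /min_task; case: s => [|i [|k s]] //; case: h => //= h; rewrite min_on_children. Qed.

Lemma consistent_shift_task h s m r x : min_on h s x = Some m ->
  shifted_min_on h s x = Some r -> consistent (shift_task h s m r) x.
Proof. by rewrite /shift_task; case: ifP => _ /=; [rewrite consistent_min_task | split]. Qed.

Lemma covers_min_task h s m j : covers (min_task h s m) j = in_blocks h s j.
Proof.
by rewrite /min_task; case: s => [|i [|k s]] //; case: h => //= h; rewrite /covers /= in_blocks_children.
Qed.

Lemma covers_shift_task h s m r j : covers (shift_task h s m r) j = in_blocks h s j.
Proof. by rewrite /shift_task; case: ifP => _; rewrite ?covers_min_task. Qed.

Lemma wf_min_task h s m : uniq s -> size s <= l -> wf_task (min_task h s m).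
Proof.
rewrite /min_task; case: s => [|i [|k s]] //; last by move=> us sl; apply/and3P.
case: h => [|h] /= _ _; first by rewrite (ltnW l_gt1).
rewrite children_uniq size_children leqnn /=.
by apply/implyP => /eqP l1; move: l_gt1; rewrite l1.
Qed.

Lemma wf_shift_task h s m r : uniq s -> size s <= l -> wf_task (shift_task h s m r).
Proof.
rewrite /shift_task; case: ifP => [_|]; first exact: wf_min_task.
by move=> /negbT; rewrite -ltnNge /= => -> -> ->.
Qed.

(** * The potential *)

Definition weight h i x := #|[pred j : 'I_N | (block h j == i) && (x j != None)]|.
Definition nonempty h i x := 0 < weight h i x.
Definition nonempty_count h s x := count (fun i => nonempty h i x) s.

(* Locating the finite entries of a nonempty block of known minimum takes at most 4c - 2
   queries to split it into its c nonempty children, plus the cost of the children. *)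
Fixpoint pot h i x : nat :=
  match h with
  | 0 => 0
  | h'.+1 => if nonempty h'.+1 i x then
               4 * nonempty_count h' (children i) x - 2 + \sum_(k <- children i) pot h' k x
             else 0
  end.

Definition pot_sum h s x := \sum_(k <- s) pot h k x.

Definition list_pot k h s x :=
  (if size s <= 1 then 0 else 4 * nonempty_count h s x - k) + pot_sum h s x.

Definition task_pot t x :=
  match t with
  | MinKnown h s _ => list_pot 2 h s x
  | ShiftKnown h s _ _ => list_pot 3 h s x
  | MinOffPivot h s _ _ => 4 * nonempty_count h s x - 4 + pot_sum h s x
  | MinAtPivot h s _ _ => 4 * nonempty_count h s x - 5 + pot_sum h s x
  end.

Lemma nonemptyP h i x : reflect (exists j, block h j = i /\ x j <> None) (nonempty h i x).
Proof.
apply: (iffP card_gt0P) => [[j]|[j [Ej Nj]]].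
  by rewrite inE => /andP [/eqP Ej /eqP Nj]; exists j.
by exists j; rewrite inE Ej eqxx; apply/eqP.
Qed.

Lemma min_on_nonempty h s x w : min_on h s x = Some w -> exists2 i, i \in s & nonempty h i x.
Proof.
move/tmin_attained => [j [sj xj]]; exists (block h j) => //.
by apply/nonemptyP; exists j; rewrite xj.
Qed.

Lemma min_on_count_gt0 h s x w : min_on h s x = Some w -> 0 < nonempty_count h s x.
Proof. by move/min_on_nonempty => [i si nei]; rewrite -has_count; apply/hasP; exists i. Qed.

Lemma min_on_single_nonempty h i x w : min_on h [:: i] x = Some w -> nonempty h i x.
Proof. by move/min_on_nonempty => [k]; rewrite inE => /eqP ->. Qed.

Lemma pot_empty h i x : ~~ nonempty h i x -> pot h i x = 0.
Proof. by case: h => //= h /negbTE ->. Qed.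

Lemma min_on_None_pot h s x : min_on h s x = None ->
  nonempty_count h s x = 0 /\ pot_sum h s x = 0.
Proof.
move/tmin_None => xN.
have empty i : i \in s -> ~~ nonempty h i x.
  by move=> si; apply/negP => /nonemptyP [j [Ej []]]; apply: xN; rewrite /in_blocks Ej.
split; first by apply/eqP; rewrite -leqn0 leqNgt -has_count; apply/hasP => [[i /empty/negP]].
by rewrite /pot_sum big1_seq // => i /andP [_ /empty]; apply: pot_empty.
Qed.

Lemma list_pot_single k h i x : list_pot k h [:: i] x = pot h i x.
Proof. by rewrite /list_pot /pot_sum /= big_cons big_nil addn0. Qed.

Lemma list_pot_le k h s x : list_pot k h s x <= 4 * nonempty_count h s x - k + pot_sum h s x.
Proof. by rewrite /list_pot; case: ifP => // _; rewrite leq_add2r. Qed.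

Lemma task_pot_min_task h s m x :
  min_on h s x = Some m -> task_pot (min_task h s m) x = list_pot 2 h s x.
Proof.
rewrite /min_task; case: s => [|i [|k s]] //; case: h => [|h] //= /min_on_single_nonempty nei.
by rewrite list_pot_single /= nei /list_pot size_children leqNgt l_gt1.
Qed.

Lemma task_pot_shift_task h s m r x :
  min_on h s x = Some m -> task_pot (shift_task h s m r) x = list_pot 3 h s x.
Proof.
by rewrite /shift_task; case: ifP => // s1 /task_pot_min_task ->; rewrite /list_pot s1.
Qed.

Lemma nonempty_count_nth h s g x : g < size s -> nonempty_count h s x =
  nonempty_count h (take g s) x + nonempty h (nth 0 s g) x + nonempty_count h (drop g.+1 s) x.
Proof. by move=> gs; rewrite {1}(take_nth_drop 0 gs) /nonempty_count count_cat /= addnA. Qed.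

Lemma pot_sum_nth h s g x : g < size s ->
  pot_sum h s x = pot_sum h (take g s) x + pot h (nth 0 s g) x + pot_sum h (drop g.+1 s) x.
Proof. by move=> gs; rewrite {1}(take_nth_drop 0 gs) /pot_sum big_cat /= big_cons addnA. Qed.

Lemma nonempty_count_cat h s1 s2 x :
  nonempty_count h (s1 ++ s2) x = nonempty_count h s1 x + nonempty_count h s2 x.
Proof. exact: count_cat. Qed.

Lemma pot_sum_cat h s1 s2 x : pot_sum h (s1 ++ s2) x = pot_sum h s1 x + pot_sum h s2 x.
Proof. exact: big_cat. Qed.

Lemma nonempty_count_take_drop n h s x :
  nonempty_count h s x = nonempty_count h (take n s) x + nonempty_count h (drop n s) x.
Proof. by rewrite -nonempty_count_cat cat_take_drop. Qed.

Lemma pot_sum_take_drop n h s x : pot_sum h s x = pot_sum h (take n s) x + pot_sum h (drop n s) x.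
Proof. by rewrite -pot_sum_cat cat_take_drop. Qed.

Definition progress t x : Prop :=
  let a := row_apply (task_query t) x in
  [/\ all wf_task (next_tasks t a), all_consistent (next_tasks t a) x,
      (forall j, covers t j -> x j != None -> has (covers^~ j) (next_tasks t a)) &
      \sum_(t' <- next_tasks t a) task_pot t' x < task_pot t x].

Lemma progress_min_known h s m x : wf_task (MinKnown h s m) -> ~~ resolved (MinKnown h s m) ->
  consistent (MinKnown h s m) x -> progress (MinKnown h s m) x.
Proof.
move=> /and3P [us sl s1] nres /= min_m.
have s_gt1 : 1 < size s.
  case: s us sl s1 nres min_m => [|i [|k s]] //=; first by rewrite min_on_nil.
  by case: h.
have s_le1F : (size s <= 1) = false by rewrite leqNgt s_gt1.
have [r shifted_r] := min_on_shifted min_m.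
have c_gt0 := min_on_count_gt0 min_m.
rewrite /progress /= shift_rowE shifted_r /shift_task s_le1F /= big_cons big_nil addn0.
split=> //=; first by rewrite us s_gt1 sl.
- by move=> j sj _; rewrite orbF.
- rewrite /list_pot s_le1F; lia.
Qed.

(** * Refining a task *)

Section SubList.
Variables (h : nat) (s s' : seq nat) (Q : pred nat) (x : tvec N).
Hypothesis in_s' : forall j, in_blocks h s' j = in_blocks h s j && Q (block_index h s j).

Lemma min_on_sub_Some w :
  (exists z, [/\ in_blocks h s z, Q (block_index h s z) & x z = Some w]) ->
  (forall j v, in_blocks h s j -> Q (block_index h s j) -> x j = Some v -> w <= v) ->
  min_on h s' x = Some w.
Proof.
move=> [z [sz Qz xz]] H; apply: tmin_Some; first by exists z; rewrite in_s' sz Qz.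
by move=> j v; rewrite in_s' => /andP [sj Qj]; apply: H.
Qed.

Lemma min_on_sub_le w j v : min_on h s' x = Some w ->
  in_blocks h s j -> Q (block_index h s j) -> x j = Some v -> w <= v.
Proof. by move=> E sj Qj; apply: (tmin_leS E); rewrite in_s' sj. Qed.

Lemma min_on_sub_attained w : min_on h s' x = Some w ->
  exists z, [/\ in_blocks h s z, Q (block_index h s z) & x z = Some w].
Proof. by move/tmin_attained => [z [s'z xz]]; move: s'z; rewrite in_s' => /andP [? ?]; exists z. Qed.

Lemma min_on_sub_None j : min_on h s' x = None ->
  in_blocks h s j -> Q (block_index h s j) -> x j = None.
Proof. by move/tmin_None => H sj Qj; apply: H; rewrite in_s' sj. Qed.

End SubList.

Section Refinement.
Variables (h : nat) (s : seq nat) (m r : nat) (x : tvec N).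
Hypotheses (s_uniq : uniq s) (s_gt1 : 1 < size s) (s_le : size s <= l).
Hypotheses (min_m : min_on h s x = Some m) (shifted_r : shifted_min_on h s x = Some r).
Local Notation g := (r - m).

Lemma min_le j v : in_blocks h s j -> x j = Some v -> m <= v.
Proof. exact: tmin_leS min_m. Qed.

Lemma min_attained : exists z, in_blocks h s z /\ x z = Some m.
Proof. exact: tmin_attained min_m. Qed.

Lemma shifted_le j v : in_blocks h s j -> x j = Some v -> r <= block_index h s j + v.
Proof. by move=> sj xj; apply: (tmin_leS shifted_r sj); rewrite xj. Qed.

Lemma shifted_attained :
  exists j v, [/\ in_blocks h s j, x j = Some v & block_index h s j + v = r].
Proof.
have [j [sj]] := tmin_attained shifted_r; case xj: (x j) => [v|] //= [E].
by exists j, v.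
Qed.

Lemma shifted_attained_le_pivot j v : in_blocks h s j -> x j = Some v ->
  block_index h s j + v = r -> block_index h s j <= g.
Proof. by move=> sj xj E; have := min_le sj xj; lia. Qed.

Lemma pivot_le_minimiser z : in_blocks h s z -> x z = Some m -> g <= block_index h s z.
Proof. by move=> sz xz; have := shifted_le sz xz; lia. Qed.

Lemma pivot_lt_size : g < size s.
Proof.
have [z [sz xz]] := min_attained.
by apply: leq_ltn_trans (pivot_le_minimiser sz xz) _; apply: block_index_lt.
Qed.

(* The index conditions are stated as beta-redexes so that [Q] is inferred when these
   lemmas are passed to the [SubList] lemmas. *)
Lemma in_pivot j :
  in_blocks h [:: nth 0 s g] j = in_blocks h s j && (fun k => k == g) (block_index h s j).
Proof. by apply: in_blocks_nth => //; apply: pivot_lt_size. Qed.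

Lemma in_off_pivot j :
  in_blocks h (rem_nth s g) j = in_blocks h s j && (fun k => k != g) (block_index h s j).
Proof. exact: in_blocks_rem_nth. Qed.

Lemma in_before_pivot j :
  in_blocks h (take g s) j = in_blocks h s j && (fun k => k < g) (block_index h s j).
Proof. exact: in_blocks_take. Qed.

Lemma in_upto_pivot j :
  in_blocks h (take g.+1 s) j = in_blocks h s j && (fun k => k < g.+1) (block_index h s j).
Proof. exact: in_blocks_take. Qed.

Lemma in_after_pivot j :
  in_blocks h (drop g.+1 s) j = in_blocks h s j && (fun k => g < k) (block_index h s j).
Proof. exact: in_blocks_drop. Qed.

Lemma min_on_pivot : (exists z, [/\ in_blocks h s z, block_index h s z <= g & x z = Some m]) ->
  min_on h [:: nth 0 s g] x = Some m.
Proof.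
move=> [z [sz le_zg xz]]; apply: (min_on_sub_Some in_pivot); last first.
  by move=> j v sj _ xj; apply: (min_le sj xj).
by exists z; split=> //=; rewrite eqn_leq le_zg pivot_le_minimiser.
Qed.

Lemma min_on_pivot_off_gt : (forall v, min_on h (rem_nth s g) x = Some v -> m < v) ->
  min_on h [:: nth 0 s g] x = Some m.
Proof.
move=> off_gt; have [z [sz xz]] := min_attained; apply: min_on_pivot.
exists z; split=> //; rewrite leqNgt; apply/negP => lt_gz.
have off_z : (fun k => k != g) (block_index h s z) by rewrite /= neq_ltn lt_gz orbT.
case E: (min_on h (rem_nth s g) x) => [v|].
  by have := min_on_sub_le in_off_pivot E sz off_z xz; rewrite leqNgt off_gt.
by rewrite (min_on_sub_None in_off_pivot E sz off_z) in xz.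
Qed.

Lemma min_on_after_pivot : min_on h (rem_nth s g) x = Some m -> min_on h (drop g.+1 s) x = Some m.
Proof.
move=> off_m; have [z [sz off_z xz]] := min_on_sub_attained in_off_pivot off_m.
apply: (min_on_sub_Some in_after_pivot); last by move=> j v sj _ xj; apply: (min_le sj xj).
by exists z; split=> //=; rewrite ltn_neqAle eq_sym off_z pivot_le_minimiser.
Qed.

Lemma shifted_min_on_upto_pivot : shifted_min_on h (take g.+1 s) x = Some r.
Proof.
have [j [v [sj xj Ej]]] := shifted_attained.
have tj : in_blocks h (take g.+1 s) j.
  by rewrite in_upto_pivot sj /= ltnS (shifted_attained_le_pivot sj xj Ej).
apply: tmin_Some; first by exists j; split=> //; rewrite block_index_take // xj /= Ej.
move=> i w ti; rewrite block_index_take //; case xi: (x i) => [u|] //= [<-].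
by move: ti; rewrite in_upto_pivot => /andP [si _]; apply: shifted_le si xi.
Qed.

Lemma wf_pivot m' : wf_task (min_task h [:: nth 0 s g] m').
Proof. by apply: wf_min_task => //=; apply: ltnW. Qed.

Lemma wf_off_pivot m' : wf_task (min_task h (rem_nth s g) m').
Proof.
have sub := rem_nth_subseq s g.
by apply: wf_min_task; [apply: subseq_uniq sub _ | apply: leq_trans (size_subseq sub) _].
Qed.

Lemma wf_before_pivot m' : wf_task (min_task h (take g s) m').
Proof. by apply: wf_min_task; rewrite ?take_uniq // size_take_min geq_min s_le orbT. Qed.

Lemma wf_after_pivot m' : wf_task (min_task h (drop g.+1 s) m').
Proof. by apply: wf_min_task; rewrite ?drop_uniq // size_drop (leq_trans (leq_subr _ _)). Qed.


Lemma task_pot_shift_known :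
  task_pot (ShiftKnown h s m r) x = 4 * nonempty_count h s x - 3 + pot_sum h s x.
Proof. by have := s_gt1; rewrite ltnNge /= /list_pot => /negbTE ->. Qed.

Lemma nonempty_count_pivot : nonempty h (nth 0 s g) x ->
  nonempty_count h s x = (nonempty_count h (take g s) x + nonempty_count h (drop g.+1 s) x).+1.
Proof. by move=> ne_g; rewrite (nonempty_count_nth _ _ pivot_lt_size) ne_g addn1 addSn. Qed.

Lemma progress_shift_split m' : min_on h (rem_nth s g) x = Some m' -> m < m' ->
  progress (ShiftKnown h s m r) x.
Proof.
move=> off_m' lt_mm'.
have piv : min_on h [:: nth 0 s g] x = Some m.
  by apply: min_on_pivot_off_gt => v; rewrite off_m' => -[<-].
rewrite /progress; cbn [next_tasks task_query]; rewrite min_rowE off_m' lt_mm'; split.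
- by rewrite /= wf_pivot wf_off_pivot.
- by split; [apply/consistent_min_task | split=> //; apply/consistent_min_task].
- move=> j sj _; rewrite /= !covers_min_task in_pivot in_off_pivot (sj : in_blocks h s j) /=.
  by case: eqP.
- rewrite !big_cons big_nil addn0 !task_pot_min_task // list_pot_single task_pot_shift_known.
  have := list_pot_le 2 h (rem_nth s g) x.
  rewrite /rem_nth nonempty_count_cat pot_sum_cat (pot_sum_nth _ _ pivot_lt_size).
  rewrite nonempty_count_pivot ?(min_on_single_nonempty piv); lia.
Qed.

Lemma progress_shift_off_pivot : min_on h (rem_nth s g) x = Some m ->
  progress (ShiftKnown h s m r) x.
Proof.
move=> off_m; rewrite /progress; cbn [next_tasks task_query]; rewrite min_rowE off_m ltnn.
split.
- by rewrite /= s_uniq s_gt1 s_le.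
- by split=> //; split.
- by move=> j sj _; rewrite /= orbF.
- rewrite big_cons big_nil addn0 task_pot_shift_known /=.
  have := min_on_count_gt0 min_m; lia.
Qed.

Lemma progress_shift_single : min_on h (rem_nth s g) x = None -> progress (ShiftKnown h s m r) x.
Proof.
move=> off_None.
have piv : min_on h [:: nth 0 s g] x = Some m.
  by apply: min_on_pivot_off_gt => v; rewrite off_None.
rewrite /progress; cbn [next_tasks task_query]; rewrite min_rowE off_None; split.
- by rewrite /= wf_pivot.
- by split=> //; apply/consistent_min_task.
- move=> j sj xj; rewrite /= orbF covers_min_task in_pivot (sj : in_blocks h s j) /=.
  apply/negPn/negP => off_j; move: xj.
  by rewrite (min_on_sub_None in_off_pivot off_None sj off_j).
- rewrite big_cons big_nil addn0 task_pot_min_task // list_pot_single task_pot_shift_known.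
  have [] := min_on_None_pot off_None.
  rewrite /rem_nth nonempty_count_cat pot_sum_cat (pot_sum_nth _ _ pivot_lt_size).
  rewrite nonempty_count_pivot ?(min_on_single_nonempty piv); lia.
Qed.

Lemma progress_shift_known : progress (ShiftKnown h s m r) x.
Proof.
case off: (min_on h (rem_nth s g) x) => [m'|]; last exact: progress_shift_single.
have [z [sz _ xz]] := min_on_sub_attained in_off_pivot off.
have := min_le sz xz; rewrite leq_eqVlt => /orP [/eqP Em'|]; last exact: progress_shift_split.
by apply: progress_shift_off_pivot; rewrite off Em'.
Qed.

Lemma progress_off_pivot_split u : min_on h (rem_nth s g) x = Some m ->
  min_on h (take g.+1 s) x = Some u -> m < u -> progress (MinOffPivot h s m r) x.
Proof.
move=> off_m upto_u lt_mu; have right_m := min_on_after_pivot off_m.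
rewrite /progress; cbn [next_tasks task_query]; rewrite min_rowE upto_u lt_mu; split.
- rewrite /= wf_after_pivot wf_shift_task ?take_uniq //.
  by rewrite size_take_min geq_min s_le orbT.
- split; first by apply: consistent_shift_task => //; apply: shifted_min_on_upto_pivot.
  by split=> //; apply/consistent_min_task.
- move=> j sj _; rewrite /= covers_shift_task covers_min_task in_upto_pivot in_after_pivot.
  by rewrite (sj : in_blocks h s j) /=; case: ltnP.
- rewrite !big_cons big_nil addn0 task_pot_shift_task // task_pot_min_task //.
  have := list_pot_le 3 h (take g.+1 s) x; have := list_pot_le 2 h (drop g.+1 s) x.
  have := min_on_count_gt0 upto_u; have := min_on_count_gt0 right_m.
  rewrite /= (nonempty_count_take_drop g.+1 h s) (pot_sum_take_drop g.+1 h s); lia.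
Qed.

Lemma progress_off_pivot_first : min_on h (rem_nth s g) x = Some m ->
  min_on h (take g.+1 s) x = Some m -> g == 0 -> progress (MinOffPivot h s m r) x.
Proof.
move=> off_m upto_m g0; have right_m := min_on_after_pivot off_m.
have [z [sz lt_zg xz]] := min_on_sub_attained in_upto_pivot upto_m.
have piv : min_on h [:: nth 0 s g] x = Some m by apply: min_on_pivot; exists z.
rewrite /progress; cbn [next_tasks task_query]; rewrite min_rowE upto_m ltnn g0; split.
- by rewrite /= wf_pivot wf_after_pivot.
- by split; [apply/consistent_min_task | split=> //; apply/consistent_min_task].
- move=> j sj _; rewrite /= !covers_min_task in_pivot in_after_pivot (sj : in_blocks h s j) /= (eqP g0).
  by case: (block_index h s j).
- rewrite !big_cons big_nil addn0 !task_pot_min_task // list_pot_single.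
  have := list_pot_le 2 h (drop g.+1 s) x; have := min_on_count_gt0 right_m.
  rewrite /= (pot_sum_nth _ _ pivot_lt_size) nonempty_count_pivot ?(min_on_single_nonempty piv) //.
  rewrite (eqP g0) take0 /pot_sum big_nil /=; lia.
Qed.

Lemma progress_off_pivot_at_pivot : min_on h (rem_nth s g) x = Some m ->
  min_on h (take g.+1 s) x = Some m -> g != 0 -> progress (MinOffPivot h s m r) x.
Proof.
move=> off_m upto_m g_neq0; have right_m := min_on_after_pivot off_m.
have [z [sz lt_zg xz]] := min_on_sub_attained in_upto_pivot upto_m.
have piv : min_on h [:: nth 0 s g] x = Some m by apply: min_on_pivot; exists z.
rewrite /progress; cbn [next_tasks task_query]; rewrite min_rowE upto_m ltnn (negbTE g_neq0).
split.
- by rewrite /= s_uniq s_gt1 s_le.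
- by split=> //; split.
- by move=> j sj _; rewrite /= orbF.
- rewrite big_cons big_nil addn0 /= nonempty_count_pivot ?(min_on_single_nonempty piv) //.
  have := min_on_count_gt0 right_m; lia.
Qed.

Lemma progress_min_off_pivot : min_on h (rem_nth s g) x = Some m ->
  progress (MinOffPivot h s m r) x.
Proof.
move=> off_m; have [j [v [sj xj Ej]]] := shifted_attained.
have upto_j : (fun k => k < g.+1) (block_index h s j).
  by rewrite /= ltnS (shifted_attained_le_pivot sj xj Ej).
case upto: (min_on h (take g.+1 s) x) => [u|]; last first.
  by rewrite (min_on_sub_None in_upto_pivot upto sj upto_j) in xj.
have [z [sz _ xz]] := min_on_sub_attained in_upto_pivot upto.
have := min_le sz xz; rewrite leq_eqVlt => /orP [/eqP Eu|]; last exact: progress_off_pivot_split.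
rewrite -Eu in upto; have [g0|g_neq0] := boolP (g == 0).
  exact: progress_off_pivot_first.
exact: progress_off_pivot_at_pivot.
Qed.

Section AtPivot.
Hypotheses (off_m : min_on h (rem_nth s g) x = Some m) (upto_m : min_on h (take g.+1 s) x = Some m).

Lemma min_on_pivot_of_upto : min_on h [:: nth 0 s g] x = Some m.
Proof.
by have [z [sz lt_zg xz]] := min_on_sub_attained in_upto_pivot upto_m; apply: min_on_pivot; exists z.
Qed.

Lemma progress_at_pivot_split v : min_on h (take g s) x = Some v -> progress (MinAtPivot h s m r) x.
Proof.
move=> left_v; have right_m := min_on_after_pivot off_m; have piv := min_on_pivot_of_upto.
rewrite /progress; cbn [next_tasks task_query]; rewrite min_rowE left_v; split.
- by rewrite /= wf_pivot wf_before_pivot wf_after_pivot.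
- split; first exact/consistent_min_task.
  by split; [apply/consistent_min_task | split=> //; apply/consistent_min_task].
- move=> j sj _; rewrite /= !covers_min_task in_pivot in_before_pivot in_after_pivot (sj : in_blocks h s j) /=.
  by case: ltngtP.
- rewrite !big_cons big_nil addn0 !task_pot_min_task // list_pot_single.
  have := list_pot_le 2 h (take g s) x; have := list_pot_le 2 h (drop g.+1 s) x.
  have := min_on_count_gt0 left_v; have := min_on_count_gt0 right_m.
  rewrite /= (pot_sum_nth _ _ pivot_lt_size) nonempty_count_pivot ?(min_on_single_nonempty piv) //.
  lia.
Qed.

Lemma progress_at_pivot_empty_left : min_on h (take g s) x = None -> progress (MinAtPivot h s m r) x.
Proof.
move=> left_None; have right_m := min_on_after_pivot off_m; have piv := min_on_pivot_of_upto.
rewrite /progress; cbn [next_tasks task_query]; rewrite min_rowE left_None; split.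
- by rewrite /= wf_pivot wf_after_pivot.
- by split; [apply/consistent_min_task | split=> //; apply/consistent_min_task].
- move=> j sj xj; rewrite /= !covers_min_task in_pivot in_after_pivot (sj : in_blocks h s j) /=.
  case: ltngtP => // lt_jg; move: xj.
  by rewrite (min_on_sub_None in_before_pivot left_None sj lt_jg).
- rewrite !big_cons big_nil addn0 !task_pot_min_task // list_pot_single.
  have := list_pot_le 2 h (drop g.+1 s) x; have := min_on_count_gt0 right_m.
  have [] := min_on_None_pot left_None.
  rewrite /= (pot_sum_nth _ _ pivot_lt_size) nonempty_count_pivot ?(min_on_single_nonempty piv) //.
  lia.
Qed.

Lemma progress_min_at_pivot : progress (MinAtPivot h s m r) x.
Proof.
case left: (min_on h (take g s) x) => [v|]; first exact: progress_at_pivot_split left.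
exact: progress_at_pivot_empty_left.
Qed.

End AtPivot.

End Refinement.

Lemma progress_task t x : wf_task t -> ~~ resolved t -> consistent t x -> progress t x.
Proof.
case: t => [h s m|h s m r|h s m r|h s m r] wft; first exact: progress_min_known.
all: case/and3P: wft => us s_gt1 sl _.
- by case=> min_m shifted_r; apply: progress_shift_known.
- by case=> min_m shifted_r off_m; apply: progress_min_off_pivot.
- by case=> min_m shifted_r off_m upto_m; apply: progress_min_at_pivot.
Qed.

(** * Resolving sparse vectors *)

Lemma split_has (T : Type) (p : pred T) (s : seq T) :
  has p s -> exists pre t post, s = pre ++ t :: post /\ p t.
Proof.
elim: s => [|t s IH] //= /orP [pt | /IH [pre [t' [post [-> pt']]]]]; first by exists [::], t, s.
by exists (t :: pre), t', post.
Qed.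

Definition explains (ts : seq task) x :=
  all_consistent ts x /\ (forall j, ~~ has (covers^~ j) ts -> x j = None).

Definition total_pot (ts : seq task) x := \sum_(t <- ts) task_pot t x.

Lemma explains_resolved_uniq ts x y :
  all resolved ts -> explains ts x -> explains ts y -> x = y.
Proof.
move=> res [cx out_x] [cy out_y]; apply/ffunP => j.
have [cov|] := boolP (has (covers^~ j) ts); last by move=> nc; rewrite out_x ?out_y.
elim: ts res cx cy cov {out_x out_y} => [|t ts IH] //= /andP [rt rts] [tx tsx] [ty tsy].
case cov_t: (covers t j) => /= cov; last exact: IH.
case: t rt tx ty cov_t => // [[|h] [|i [|k s]] m] //= _ tx ty cov_t.
have xjm (z : tvec N) : min_on 0 [:: i] z = Some m -> z j = Some m.
  move=> /tmin_attained [j' [ij' zj']]; suff -> : j = j' by [].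
  apply: val_inj; move: cov_t ij'; rewrite /covers /= /in_blocks /block !inE expn0 !divn1.
  by move=> /eqP -> /eqP ->.
by rewrite (xjm _ tx) (xjm _ ty).
Qed.

Lemma explains_refine pre t post x a : wf_task t -> ~~ resolved t ->
  explains (pre ++ t :: post) x -> row_apply (task_query t) x = a ->
  [/\ all wf_task (next_tasks t a), explains (pre ++ next_tasks t a ++ post) x &
      total_pot (pre ++ next_tasks t a ++ post) x < total_pot (pre ++ t :: post) x].
Proof.
move=> wf_t nres [/all_consistent_cat [cpre [ct cpost]] out] <-.
have [wf_next c_next cov_next pot_next] := progress_task wf_t nres ct.
split=> //; last by rewrite /total_pot !big_cat big_cons /= -/(total_pot _ x); lia.
split; first by apply/all_consistent_cat; split=> //; apply/all_consistent_cat.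
move=> j; rewrite !has_cat negb_or => /andP [npre /norP [nnext npost]].
have [cov_tj|ncov_tj] := boolP (covers t j).
  by apply/eqP; apply: contraNT nnext; apply: cov_next.
by apply: out; rewrite has_cat /= negb_or npre /= negb_or ncov_tj.
Qed.

Lemma resolvable_resolved n ts (P : tvec N -> Prop) :
  all resolved ts -> resolvable l n (fun x => explains ts x /\ P x).
Proof.
move=> res; apply: resolvable_subsingleton => x y [ex _] [ey _].
exact: explains_resolved_uniq ex ey.
Qed.

Lemma unresolved_split ts : all wf_task ts -> ~~ all resolved ts ->
  exists pre t post, [/\ ts = pre ++ t :: post, wf_task t & ~~ resolved t].
Proof.
move=> wf_ts; rewrite -has_predC => /split_has [pre [t [post [Ets nres]]]].
exists pre, t, post; split=> //.
by move: wf_ts; rewrite Ets all_cat => /andP [_ /andP []].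
Qed.

Lemma resolvable_explains n ts : all wf_task ts ->
  resolvable l n (fun x => explains ts x /\ total_pot ts x <= n).
Proof.
elim: n ts => [|n IH] ts wf_ts;
  (have [res|] := boolP (all resolved ts); first exact: resolvable_resolved);
  move=> /(unresolved_split wf_ts) [pre [t [post [Ets wf_t nres]]]]; subst ts.
  by move=> x y [ex pot_x]; have [_ _] := explains_refine wf_t nres ex erefl; lia.
exists (task_query t) => [|a]; first exact: admissible_task_query.
have [[x0 [[ex0 _] ans0]] | no_x] := classic (exists x0,
  (explains (pre ++ t :: post) x0 /\ total_pot (pre ++ t :: post) x0 <= n.+1) /\
  row_apply (task_query t) x0 = a); last first.
  by apply: resolvable_subsingleton => x y Kx; case: no_x; exists x.
have [wf_next _ _] := explains_refine wf_t nres ex0 ans0.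
have wf_ts' : all wf_task (pre ++ next_tasks t a ++ post).
  by move: wf_ts; rewrite !all_cat /= => /and3P [-> _ ->]; rewrite wf_next.
apply: resolvable_sub (IH _ wf_ts') => x [[ex pot_x] ans].
by have [_ ex' lt] := explains_refine wf_t nres ex ans; split=> //; lia.
Qed.

Lemma weight_children h i x : weight h.+1 i x = \sum_(k <- children i) weight h k x.
Proof.
have card_sum (A : pred 'I_N) : #|A| = \sum_(j : 'I_N) (A j : nat).
  by rewrite -sum1_card big_mkcond; apply: eq_bigr => j _; rewrite -topredE /=; case: (A j).
rewrite /weight card_sum; under eq_bigr => k _ do rewrite card_sum.
rewrite exchange_big; apply: eq_bigr => j _ /=.
case: (x j != None); last by rewrite andbF big1_seq // => k _; rewrite andbF.
rewrite andbT; under eq_bigr => k _ do rewrite andbT eq_sym.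
have -> : \sum_(k <- children i) (k == block h j : nat) = count_mem (block h j) (children i).
  by elim: (children i) => [|k s IHs]; rewrite ?big_nil ?big_cons ?IHs.
by rewrite count_uniq_mem ?children_uniq // mem_children blockS.
Qed.

Lemma pot_le h i x : pot h i x <= 4 * h * weight h i x.
Proof.
elim: h i => [|h IH] i //=; case: ifP => // _; rewrite weight_children.
have count_le : nonempty_count h (children i) x <= \sum_(k <- children i) weight h k x.
  elim: (children i) => [|k s IHs]; rewrite ?big_nil ?big_cons //=.
  by apply: leq_add => //; rewrite /nonempty; case: (weight h k x).
have pot_le : \sum_(k <- children i) pot h k x <= 4 * h * \sum_(k <- children i) weight h k x.
  by rewrite big_distrr; apply: leq_sum => k _; apply: IH.
lia.
Qed.

Lemma resolvable_sparse D : resolvable l (4 * D * up_log l N + 1) (fun x => nfinite x <= D).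
Proof.
set L := up_log l N.
have block_top (j : 'I_N) : block L j = 0.
  by rewrite /block divn_small // (leq_trans (ltn_ord j) (up_logP N l_gt1)).
have top (j : 'I_N) : in_blocks L [:: 0] j by rewrite /in_blocks block_top inE.
rewrite addn1; exists (min_row L [:: 0]) => [|a]; first exact: admissible_min_row.
case: a => [m|]; last first.
  apply: resolvable_subsingleton => x y [_ Ex] [_ Ey]; apply/ffunP => j.
  by move: Ex Ey; rewrite !min_rowE => /tmin_None -> // /tmin_None -> //.
have wf_top : all wf_task [:: min_task L [:: 0] m] by rewrite /= wf_min_task // ltnW.
apply: resolvable_sub (resolvable_explains (4 * D * L) wf_top) => x [Dx Ex].
rewrite min_rowE in Ex; split; first split.
- by split=> //; apply/consistent_min_task.
- by move=> j; rewrite /= covers_min_task top.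
- rewrite /total_pot big_cons big_nil addn0 task_pot_min_task // list_pot_single.
  apply: leq_trans (pot_le _ _ _) _.
  have -> : weight L 0 x = nfinite x.
    by apply: eq_card => j; rewrite !inE block_top eqxx.
  by rewrite -(mulnA 4 D) (mulnC D) mulnA leq_mul2l Dx orbT.
Qed.

End Blocks.

Theorem mainTheorem18 (l N D : nat) :
  2 <= l -> 1 <= N ->
  let T := 4 * D * up_log l N + 1 in
  exists S : protocol N,
    is_tropical_protocol T T N D S /\ within_delay T N l S.
Proof. by move=> l_gt1 _ T; apply: resolvable_protocol; apply: resolvable_sparse. Qed.
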